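(* For every $n\ge0$ and $r\in\mathcal{Y}_n$, in the Hopf algebra $\mathcal{Y}Sym$, $$\Delta(M_r)=\sum_{r=s\backslash t}M_s\otimes M_t,$$ the sum over all pairs of trees $(s,t)$ (with $s\in\mathcal{Y}_j$, $t\in\mathcal{Y}_{n-j}$ for some $0\le j\le n$) such that $r=s\backslash t$.
   Context: $\mathcal{Y}_n$ is the set of rooted planar binary trees with $n$ internal nodes ($n+1$ leaves); $\mathcal{Y}_0=\{|\}$. For $s\in\mathcal{Y}_p,t\in\mathcal{Y}_q$, $s\vee t\in\mathcal{Y}_{p+q+1}$ has a root with left subtree $s$ and right subtree $t$; each $t\in\mathcal{Y}_n$, $n\ge1$, is uniquely $t_l\vee t_r$. The Tamari order on $\mathcal{Y}_n$ is generated by replacing a subtree $(a\vee b)\vee c$ by the larger $a\vee(b\vee c)$. $s\backslash t$ is defined by $|\backslash t=t$, $s\backslash t=s_l\vee(s_r\backslash t)$ (graft the root of $t$ onto the rightmost leaf of $s$). $\mathcal{Y}Sym$ (the graded dual of the Loday–Ronco Hopf algebra) is the graded Hopf algebra over $\mathbb{Q}$ with basis $\{F_t\}$, $t\in\bigsqcup_n\mathcal{Y}_n$, $F_t$ of degree $n$ for $t\in\mathcal{Y}_n$. Number the leaves of $t\in\mathcal{Y}_n$ by $0,\dots,n$ left to right. Splitting $t$ at leaf $i$ gives a pair $t\to(t_0,t_1)$ (the pieces left and right of the path from leaf $i$ to the root), defined recursively: $|$ splits at its unique leaf as $(|,|)$; if $t=t_l\vee t_r$ and leaf $i$ lies in $t_l$,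 where $t_l$ splits there as $(a,b)$, then $t\to(a,b\vee t_r)$; if leaf $i$ lies in $t_r$, where $t_r$ splits there as $(c,d)$, then $t\to(t_l\vee c,d)$. The coproduct is $\Delta(F_t)=\sum_{i=0}^n F_{t_0}\otimes F_{t_1}$ over these splittings. (The product, not needed here, is described by grafting pieces of divisions of $t$ onto leaves of $s$.) The monomial basis is $M_t:=\sum_{t\le s}\mu_{\mathcal{Y}_n}(t,s)F_s$, with $\mu_{\mathcal{Y}_n}$ the Möbius function of the Tamari order, equivalently $F_t=\sum_{s\ge t}M_s$. *)

From HB Require Import structures.
From mathcomp Require Import all_boot all_order all_algebra.
From Stdlib Require Import Relations ClassicalEpsilon.
Set Implicit Arguments. Unset Strict Implicit. Unset Printing Implicit Defensive.
Import GRing.Theory Num.Theory.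
Local Open Scope ring_scope.

(** Rooted planar binary trees; [Leaf] is the tree | with no internal node,
    [Node l r] is  l \vee r. *)
Inductive tree : Type := Leaf | Node of tree & tree.

Fixpoint tree_eqb (s t : tree) : bool :=
  match s, t with
  | Leaf, Leaf => true
  | Node a b, Node c d => tree_eqb a c && tree_eqb b d
  | _, _ => false
  end.

Lemma tree_eqP : Equality.axiom tree_eqb.
Proof.
elim=> [|a IHa b IHb] [|c d] /=; try by constructor.
case: (IHa c) => [->|Hac]; last by constructor; case.
case: (IHb d) => [->|Hbd]; last by constructor; case.
by constructor.
Qed.

HB.instance Definition _ := hasDecEq.Build tree tree_eqP.

(** number of internal nodes: t \in Y_n  iff  nnodes t = n *)
Fixpoint nnodes (t : tree) : nat :=
  match t with Leaf => 0%N | Node l r => (nnodes l + nnodes r).+1 end.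

Fixpoint trees_depth (d : nat) : seq tree :=
  match d with
  | 0 => [:: Leaf]
  | d'.+1 => Leaf :: [seq Node l r | l <- trees_depth d', r <- trees_depth d']
  end.

(** Y_n, enumerated without repetition (a tree with n internal nodes has depth <= n). *)
Definition trees (n : nat) : seq tree := [seq t <- trees_depth n | nnodes t == n].

Inductive rot : tree -> tree -> Prop :=
  | rot_here a b c : rot (Node (Node a b) c) (Node a (Node b c))
  | rot_left l l' r : rot l l' -> rot (Node l r) (Node l' r)
  | rot_right l r r' : rot r r' -> rot (Node l r) (Node l r').

Definition tamari_le : tree -> tree -> Prop := clos_refl_trans tree rot.

Definition tle (t s : tree) : bool :=
  if excluded_middle_informative (tamari_le t s) then true else false.

(** Möbius function of the Tamari poset, by the usual recursion
    mu(t,t) = 1, mu(t,s) = - sum_{t <= u < s} mu(t,u) for t < s, 0 otherwise;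
    computed with fuel (any chain in Y_n has fewer than #Y_n + 1 elements,
    so the fuel below is always sufficient). *)
Fixpoint mu_f (k : nat) (t s : tree) : rat :=
  match k with
  | 0 => 0
  | k'.+1 =>
      if t == s then 1
      else if tle t s then
        - \sum_(u <- trees (nnodes t) | tle t u && tle u s && (u != s)) mu_f k' t u
      else 0
  end.

Definition mu (t s : tree) : rat := mu_f (size (trees (nnodes t))).+1 t s.

(** Grafting s \ t: graft the root of t onto the rightmost leaf of s. *)
Fixpoint over (s t : tree) : tree :=
  match s with Leaf => t | Node l r => Node l (over r t) end.

(** Splitting t at leaf i (leaves numbered 0..nnodes t from left to right). *)
Fixpoint tsplit (t : tree) (i : nat) : tree * tree :=
  match t with
  | Leaf => (Leaf, Leaf)
  | Node l r =>
      if (i <= nnodes l)%N then let: (a, b) := tsplit l i in (a, Node b r)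
      else let: (c, d) := tsplit r (i - (nnodes l).+1) in (Node l c, d)
  end.

(** Elements of YSym (resp. YSym ⊗ YSym) as finite formal Q-linear combinations
    of the basis F_t (resp. F_a ⊗ F_b). *)
Definition elt := seq (rat * tree).
Definition elt2 := seq (rat * (tree * tree)).

Definition coef2 (x : elt2) (a b : tree) : rat :=
  \sum_(p <- x | p.2 == (a, b)) p.1.

Definition Mb (t : tree) : elt :=
  [seq (mu t s, s) | s <- trees (nnodes t) & tle t s].

(** the coproduct, extended linearly from Delta(F_t) = sum_i F_{t_0} ⊗ F_{t_1} *)
Definition Delta (x : elt) : elt2 :=
  flatten [seq [seq (p.1, tsplit p.2 i) | i <- iota 0 (nnodes p.2).+1] | p <- x].

Definition tensor (x y : elt) : elt2 :=
  [seq (p.1 * q.1, (p.2, q.2)) | p <- x, q <- y].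

Definition decomps (r : tree) : seq (tree * tree) :=
  [seq st <- flatten [seq [seq (s, t) | s <- trees j, t <- trees (nnodes r - j)]
                         | j <- iota 0 (nnodes r).+1]
     | over st.1 st.2 == r].

Definition rhs (r : tree) : elt2 :=
  flatten [seq tensor (Mb st.1) (Mb st.2) | st <- decomps r].

From Pilot Require Import Defs.
From mathcomp Require Import all_boot all_order all_algebra zify.
From Stdlib Require Import Relations ClassicalEpsilon.
(* Re-import so that [over] and [rot] denote the grafting and the rotation,
   not ssreflect's [over] and seq's [rot]. *)
Import Defs.
Set Implicit Arguments. Unset Strict Implicit. Unset Printing Implicit Defensive.
Import GRing.Theory.
Local Open Scope ring_scope.

(* Since F_t = sum_(s >= t) M_s, the M_a ⊗ M_b-coefficient of
   sum f(a',b') F_a' ⊗ F_b' is the double down-sum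
   sum_(a' <= a, b' <= b) f(a',b')  ([down_sum2 f a b]), and by triangularity it
   determines f.  So it suffices that both sides have M_a ⊗ M_b-coefficient
   [r = a\b].  On the left it is the sum of mu(r,u) over the u >= r whose
   splitting at leaf |a| lies below (a,b); by the Galois connection
   "split_|a| u <= (a,b) iff u <= a\b" this is sum_(r <= u <= a\b) mu(r,u),
   i.e. [r = a\b].  On the right, M_s ⊗ M_t contributes [s = a][t = b]. *)

Lemma sum_pred1_uniq (T : eqType) (R : nmodType) (s : seq T) (P : pred T) y
    (F : T -> R) :
  uniq s -> \sum_(x <- s | P x && (x == y)) F x = if (y \in s) && P y then F y else 0.
Proof.
elim: s => [|z s IH] /=; first by rewrite big_nil.
move=> /andP [z_notin uniq_s]; rewrite big_cons IH // in_cons.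
case: (eqVneq z y) => [<-|ne] /=; rewrite ?andbT ?(negbTE z_notin) /=.
  by case: (P z); rewrite ?addr0.
by rewrite andbF; case: (P z).
Qed.

Lemma sum_indicator_uniq (T : eqType) (R : pzSemiRingType) (s : seq T) (P : pred T) y :
  uniq s -> \sum_(x <- s | P x) ((x == y)%:R : R) = ((y \in s) && P y)%:R.
Proof.
move=> uniq_s; rewrite (eq_bigr (fun x => if x == y then 1 else 0)).
  by rewrite -big_mkcondr sum_pred1_uniq //; case: (_ && _).
by move=> x _; case: (x == y).
Qed.

Lemma count_lt_subpred (T : eqType) (P1 P2 : pred T) (s : seq T) x :
  subpred P1 P2 -> x \in s -> P2 x -> ~~ P1 x -> (count P1 s < count P2 s)%N.
Proof.
move=> sub12; elim: s => //= y s IH; rewrite in_cons => /orP [/eqP <-|x_in] P2x P1x.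
  by rewrite P2x (negbTE P1x) add0n add1n ltnS sub_count.
have := IH x_in P2x P1x; case P1y: (P1 y); first by rewrite (sub12 y P1y) /=; lia.
case: (P2 y) => /=; lia.
Qed.

Lemma uniq_flatten_graded (T : eqType) (deg : T -> nat) (g : nat -> seq T) (js : seq nat) :
  uniq js -> (forall j, uniq (g j)) -> (forall j x, x \in g j -> deg x = j) ->
  uniq (flatten [seq g j | j <- js]).
Proof.
move=> + uniq_g deg_g; elim: js => //= j js IH /andP [j_notin /IH uniq_rest].
rewrite cat_uniq uniq_g uniq_rest andbT; apply/hasPn => x /flatten_mapP [j' j'_in x_in].
apply/negP => /deg_g; rewrite (deg_g _ _ x_in) => eq_j'j.
by move: j_notin; rewrite -eq_j'j j'_in.
Qed.

Lemma clos_rt_hom (A B : Type) (R : relation A) (S : relation B) (f : A -> B) :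
  (forall b, S b b) -> (forall b1 b2 b3, S b1 b2 -> S b2 b3 -> S b1 b3) ->
  (forall x y, R x y -> S (f x) (f y)) ->
  forall x y, clos_refl_trans A R x y -> S (f x) (f y).
Proof. by move=> S_refl S_trans hom x y; elim=> [||? ? ? _ + _]; eauto. Qed.

Lemma tleP t s : reflect (tamari_le t s) (tle t s).
Proof. by rewrite /tle; case: excluded_middle_informative => h; constructor. Qed.

Lemma rot_nnodes x y : rot x y -> nnodes x = nnodes y.
Proof. by elim=> //= *; lia. Qed.

Lemma tle_nnodes x y : tamari_le x y -> nnodes x = nnodes y.
Proof. by elim=> // [x' y' /rot_nnodes|x' y' z' _ -> _ ->]. Qed.

Lemma tle_refl t : tamari_le t t.
Proof. exact: rt_refl. Qed.

Lemma tle_trans x y z : tamari_le x y -> tamari_le y z -> tamari_le x z.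
Proof. exact: rt_trans. Qed.

Lemma tle_rot x y : rot x y -> tamari_le x y.
Proof. exact: rt_step. Qed.

Fixpoint right_weight (t : tree) : nat :=
  match t with
  | Leaf => 0%N
  | Node l r => (right_weight l + right_weight r + nnodes r)%N
  end.

Lemma rot_right_weight x y : rot x y -> (right_weight x < right_weight y)%N.
Proof.
elim=> /= [a b c|l l' r _|l r r' /rot_nnodes <-]; lia.
Qed.

Lemma tle_right_weight x y :
  tamari_le x y -> x = y \/ (right_weight x < right_weight y)%N.
Proof.
elim=> [x' y' /rot_right_weight|x'|x' y' z' _ [->|lt_xy] _ [<-|lt_yz]]; auto.
by right; lia.
Qed.

Lemma tle_antisym x y : tamari_le x y -> tamari_le y x -> x = y.
Proof. by move=> /tle_right_weight [//|lt_xy] /tle_right_weight [//|lt_yx]; lia. Qed.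

Lemma tle_map (f : tree -> tree) :
  (forall x y, rot x y -> rot (f x) (f y)) ->
  forall x y, tamari_le x y -> tamari_le (f x) (f y).
Proof.
move=> rot_f; apply: clos_rt_hom => [x|x y z|x y /rot_f].
- exact: tle_refl.
- exact: tle_trans.
- exact: tle_rot.
Qed.

Lemma tle_nodel l l' r : tamari_le l l' -> tamari_le (Node l r) (Node l' r).
Proof. exact: (tle_map (fun x y => @rot_left x y r)). Qed.

Lemma tle_noder l r r' : tamari_le r r' -> tamari_le (Node l r) (Node l r').
Proof. exact: (tle_map (@rot_right l)). Qed.

Lemma nnodes_over s t : nnodes (over s t) = (nnodes s + nnodes t)%N.
Proof. by elim: s => //= l _ r ->; lia. Qed.

Lemma tle_over s s' t t' :
  tamari_le s s' -> tamari_le t t' -> tamari_le (over s t) (over s' t').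
Proof.
have rot_overl u : forall x y, rot x y -> rot (over x u) (over y u).
  by move=> x y; elim=> /= *; constructor.
have rot_overr u : forall x y, rot x y -> rot (over u x) (over u y).
  by elim: u => //= l _ r IH x y /IH; constructor.
move=> /(tle_map (rot_overl t)) le_s /(tle_map (rot_overr s')) le_t.
exact: tle_trans le_s le_t.
Qed.

Lemma tle_node_over a b c : tamari_le (Node (over a b) c) (over a (Node b c)).
Proof.
elim: a => [|x _ y IH] /=; first exact: tle_refl.
by apply: tle_trans (tle_rot (rot_here _ _ _)) _; apply: tle_noder.
Qed.

Lemma tsplit_node l r i : tsplit (Node l r) i =
  if (i <= nnodes l)%N then ((tsplit l i).1, Node (tsplit l i).2 r)
  else (Node l (tsplit r (i - (nnodes l).+1)).1, (tsplit r (i - (nnodes l).+1)).2).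
Proof. by rewrite /=; case: ifP; case: tsplit. Qed.

Lemma nnodes_tsplit1 u i : nnodes (tsplit u i).1 = minn i (nnodes u).
Proof.
elim: u i => [|l IHl r IHr] i; first by rewrite minn0.
by rewrite tsplit_node; case: ifP => /= [le_il|/negbT lt_li]; rewrite ?IHl ?IHr; lia.
Qed.

Lemma tsplit0 t : tsplit t 0 = (Leaf, t).
Proof. by elim: t => //= l -> r _. Qed.

Lemma tsplit_over s t : tsplit (over s t) (nnodes s) = (s, t).
Proof.
elim: s => [|l _ r IH] /=; first exact: tsplit0.
by rewrite ifF ?subSS ?addKn ?IH //; lia.
Qed.

Lemma tle_tsplit_over u i : tamari_le u (over (tsplit u i).1 (tsplit u i).2).
Proof.
elim: u i => [|l IHl r IHr] i; first exact: tle_refl.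
rewrite tsplit_node; case: ifP => _ /=; last exact: tle_noder.
exact: tle_trans (tle_nodel _ (IHl i)) (tle_node_over _ _ _).
Qed.

Lemma rot_tsplit u u' i : rot u u' ->
  tamari_le (tsplit u i).1 (tsplit u' i).1 /\ tamari_le (tsplit u i).2 (tsplit u' i).2.
Proof.
move=> rot_uu'; elim: rot_uu' i => [a b c|l l' r rot_l IH|l r r' rot_r IH] i.
- rewrite (tsplit_node (Node a b)) (tsplit_node a (Node b c)).
  rewrite (tsplit_node a b) (tsplit_node b c) /=.
  have -> : (i - (nnodes a + nnodes b).+2 = i - (nnodes a).+1 - (nnodes b).+1)%N by lia.
  case: (leqP i (nnodes a)) => h1; case: (leqP i (nnodes a + nnodes b).+1) => h2;
    case: (leqP (i - (nnodes a).+1) (nnodes b)) => h3; try lia;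
    by split; apply: tle_refl || apply/tle_rot/rot_here.
- rewrite !tsplit_node -(rot_nnodes rot_l); case: ifP => _ /=.
    by case: (IH i) => le1 le2; split; [|apply: tle_nodel].
  by split; [apply/tle_rot/rot_left|apply: tle_refl].
- rewrite !tsplit_node; case: ifP => _ /=.
    by split; [apply: tle_refl|apply/tle_rot/rot_right].
  by case: (IH (i - (nnodes l).+1)%N) => le1 le2; split; [apply: tle_noder|].
Qed.

Lemma tle_tsplit u u' i : tamari_le u u' ->
  tamari_le (tsplit u i).1 (tsplit u' i).1 /\ tamari_le (tsplit u i).2 (tsplit u' i).2.
Proof.
apply: (clos_rt_hom (f := tsplit^~ i)
  (S := fun p q => tamari_le p.1 q.1 /\ tamari_le p.2 q.2)).
- by move=> p; split; apply: tle_refl.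
- move=> p q w [le1 le2] [le3 le4].
  by split; [apply: tle_trans le1 le3|apply: tle_trans le2 le4].
- by move=> x y; apply: rot_tsplit.
Qed.

Lemma tle_over_tsplit u a b :
  tle u (over a b) = tle (tsplit u (nnodes a)).1 a && tle (tsplit u (nnodes a)).2 b.
Proof.
apply/tleP/andP => [/(tle_tsplit (nnodes a))|[/tleP le_a /tleP le_b]].
  by rewrite tsplit_over => -[le_a le_b]; split; apply/tleP.
exact: tle_trans (tle_tsplit_over u (nnodes a)) (tle_over le_a le_b).
Qed.

Fixpoint height (t : tree) : nat :=
  match t with Leaf => 0%N | Node l r => (maxn (height l) (height r)).+1 end.

Lemma mem_trees_depth d t : (t \in trees_depth d) = (height t <= d)%N.
Proof.
elim: d t => [|d IH] [|l r] //=; rewrite in_cons /= ltnS geq_max -!IH.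
apply/allpairsP/andP => [[[x y] [x_in y_in [-> ->]]] //|[l_in r_in]].
by exists (l, r).
Qed.

Lemma mem_trees n t : (t \in trees n) = (nnodes t == n).
Proof.
rewrite mem_filter mem_trees_depth; case: eqP => // <-.
by elim: t => //= l hl r hr; lia.
Qed.

Lemma uniq_trees n : uniq (trees n).
Proof.
apply: filter_uniq; elim: n => //= n IH; rewrite allpairs_uniq // ?andbT.
  by apply/allpairsP => -[[x y] [_ _]].
by move=> [x y] [x' y'] _ _ [-> ->].
Qed.

Lemma mem_decomps r st : (st \in decomps r) = (over st.1 st.2 == r).
Proof.
rewrite mem_filter; case: eqP => // <-; rewrite nnodes_over.
apply/flatten_mapP; exists (nnodes st.1); first by rewrite mem_iota leq0n add0n ltnS leq_addr.
by apply/allpairsP; exists st; rewrite !mem_trees addKn; case: st.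
Qed.

Lemma uniq_decomps r : uniq (decomps r).
Proof.
apply/filter_uniq/(uniq_flatten_graded (deg := fun st => nnodes st.1)) => [|j|j st].
- exact: iota_uniq.
- by rewrite allpairs_uniq ?uniq_trees // => -[? ?] [? ?] _ _ [-> ->].
- by move=> /allpairsP [[s t] [/=]]; rewrite mem_trees => /eqP <- _ ->.
Qed.

Definition interval_size (t s : tree) : nat :=
  count (fun u => tle t u && tle u s) (trees (nnodes t)).

Lemma interval_size_gt0 t s : tamari_le t s -> (0 < interval_size t s)%N.
Proof.
move=> le_ts; rewrite -has_count; apply/hasP; exists t; first by rewrite mem_trees.
by apply/andP; split; apply/tleP => //; apply: tle_refl.
Qed.

Lemma interval_size_lt t u s : tamari_le t u -> tamari_le u s -> u != s ->
  (interval_size t u < interval_size t s)%N.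
Proof.
move=> le_tu le_us ne_us; apply: (@count_lt_subpred _ _ _ _ s).
- move=> x /andP [/tleP le_tx /tleP le_xu]; apply/andP; split; apply/tleP => //.
  exact: tle_trans le_xu le_us.
- by rewrite mem_trees (tle_nnodes (tle_trans le_tu le_us)).
- by apply/andP; split; apply/tleP; [apply: tle_trans le_tu le_us|apply: tle_refl].
- apply/negP => /andP [_ /tleP le_su]; move/negP: ne_us; apply; apply/eqP.
  exact: tle_antisym le_us le_su.
Qed.

(* The recursion defining [mu_f] only descends into strictly smaller
   intervals, so any fuel beyond the interval size gives the same value. *)
Lemma mu_f_stable k m t s :
  (interval_size t s <= k)%N -> mu_f (k + m) t s = mu_f k t s.
Proof.
elim: k s => [|k IH] s le_size.
  have not_le_ts : ~ tamari_le t s by move/interval_size_gt0; lia.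
  case: m => //= m; case: eqP => [eq_ts|_].
    by case: not_le_ts; rewrite eq_ts; apply: tle_refl.
  by case: tleP.
rewrite addSn /=; case: eqP => // _; case: tleP => // _.
congr (- _); apply: eq_bigr => u /andP [/andP [/tleP le_tu /tleP le_us] ne_us].
by apply: IH; have := interval_size_lt le_tu le_us ne_us; lia.
Qed.

Lemma mu_eq0 t s : ~ tamari_le t s -> mu t s = 0.
Proof.
move=> not_le_ts; rewrite /mu /=; case: eqP => [eq_ts|_]; last by case: tleP.
by case: not_le_ts; rewrite eq_ts; apply: tle_refl.
Qed.

Lemma mu_rec t s : tamari_le t s -> t != s ->
  mu t s = - \sum_(u <- trees (nnodes t) | tle t u && tle u s && (u != s)) mu t u.
Proof.
move=> le_ts ne_ts; rewrite {1}/mu /= (negbTE ne_ts); case: tleP => // _.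
congr (- _); apply: eq_bigr => u _.
by rewrite /mu -addn1 mu_f_stable // count_size.
Qed.

Lemma sum_mu_interval t s :
  \sum_(u <- trees (nnodes t) | tle t u && tle u s) mu t u = (t == s)%:R.
Proof.
case: (tleP t s) => le_ts; last first.
  rewrite big1 => [|u /andP [/tleP le_tu /tleP le_us]].
    by case: eqP => // eq_ts; case: le_ts; rewrite eq_ts; apply: tle_refl.
  by case: le_ts; apply: tle_trans le_tu le_us.
rewrite (bigID (fun u => u == s)) /= sum_pred1_uniq ?uniq_trees // mem_trees.
rewrite -(tle_nnodes le_ts) eqxx; case: tleP => // _.
case: tleP => [_ /=|]; last by case; apply: tle_refl.
case: (eqVneq t s) => [eq_ts|ne_ts]; last by rewrite (mu_rec le_ts ne_ts) addNr.
rewrite -eq_ts /mu /= eqxx big1 ?addr0 // => u /andP [/andP [/tleP le_tu /tleP le_ut] ne_ut].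
by move: ne_ut; rewrite (tle_antisym le_ut le_tu) eqxx.
Qed.

Definition down_sum (R : nmodType) (f : tree -> R) (a : tree) : R :=
  \sum_(a' <- trees (nnodes a) | tle a' a) f a'.

Definition down_sum2 (R : nmodType) (f : tree -> tree -> R) (a b : tree) : R :=
  down_sum (fun a' => down_sum (f a') b) a.

Lemma down_sum_eq0 (R : zmodType) (f : tree -> R) :
  (forall a, down_sum f a = 0) -> forall a, f a = 0.
Proof.
move=> f_down0 a.
elim: {a}(right_weight a).+1 {-2}a (ltnSn (right_weight a)) => // k IH a lt_ak.
rewrite -(f_down0 a) /down_sum big_mkcond (bigD1_seq a) ?mem_trees ?uniq_trees //=.
have /tleP -> := tle_refl a; rewrite big1 ?addr0 // => a' ne_a'a.
case: tleP => // le_a'a; apply: IH.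
by case: (tle_right_weight le_a'a) => [eq_a'a|]; [move: ne_a'a; rewrite eq_a'a eqxx|lia].
Qed.

Lemma down_sum_inj (R : zmodType) (f g : tree -> R) :
  (forall a, down_sum f a = down_sum g a) -> f =1 g.
Proof.
move=> eq_down a; apply/eqP; rewrite -subr_eq0; apply/eqP; move: a.
by apply: down_sum_eq0 => a; move: (eq_down a); rewrite /down_sum sumrB => ->; rewrite subrr.
Qed.

Lemma down_sum2_inj (R : zmodType) (f g : tree -> tree -> R) :
  (forall a b, down_sum2 f a b = down_sum2 g a b) -> f =2 g.
Proof.
move=> eq_down2 a; apply: down_sum_inj => b; move: a.
exact: down_sum_inj (eq_down2^~ b).
Qed.

Lemma eq_down_sum2 (R : nmodType) (f g : tree -> tree -> R) a b :
  (forall a' b', tle a' a -> tle b' b -> f a' b' = g a' b') ->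
  down_sum2 f a b = down_sum2 g a b.
Proof. by move=> eq_fg; apply: eq_bigr => a' le_a'a; apply: eq_bigr => b'; apply: eq_fg. Qed.

Lemma down_sum2_sum (R : nmodType) (I : Type) (s : seq I) (P : pred I)
    (F : I -> tree -> tree -> R) a b :
  down_sum2 (fun a' b' => \sum_(i <- s | P i) F i a' b') a b =
  \sum_(i <- s | P i) down_sum2 (F i) a b.
Proof.
by rewrite /down_sum2 /down_sum; under eq_bigr do rewrite exchange_big; exact: exchange_big.
Qed.

Lemma down_sum2Z (R : pzSemiRingType) (c : R) (f : tree -> tree -> R) a b :
  down_sum2 (fun a' b' => c * f a' b') a b = c * down_sum2 f a b.
Proof.
by rewrite /down_sum2 /down_sum mulr_sumr; apply: eq_bigr => a' _; rewrite mulr_sumr.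
Qed.

Lemma down_sum2M (R : pzSemiRingType) (f g : tree -> R) a b :
  down_sum2 (fun a' b' => f a' * g b') a b = down_sum f a * down_sum g b.
Proof.
by rewrite /down_sum2 /down_sum mulr_suml; apply: eq_bigr => a' _; rewrite mulr_sumr.
Qed.

Lemma down_sum_pred1 (R : pzSemiRingType) x a :
  down_sum (fun a' => ((x == a')%:R : R)) a = (tle x a)%:R.
Proof.
rewrite /down_sum; under eq_bigr do rewrite eq_sym.
rewrite sum_indicator_uniq ?uniq_trees // mem_trees.
by case: (tleP x a) => [/tle_nnodes ->|_]; rewrite ?eqxx ?andbF.
Qed.

Lemma down_sum2_pred1 (R : pzSemiRingType) (p : tree * tree) a b :
  down_sum2 (fun a' b' => ((p == (a', b'))%:R : R)) a b = (tle p.1 a && tle p.2 b)%:R.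
Proof.
case: p => x y /=; under eq_down_sum2 => a' b' _ _ do rewrite xpair_eqE -mulnb natrM.
by rewrite down_sum2M !down_sum_pred1 -natrM mulnb.
Qed.

Lemma down_sum_mu s a : down_sum (mu s) a = (s == a)%:R.
Proof.
case: (tleP s a) => [le_sa|not_le_sa].
  rewrite -sum_mu_interval (tle_nnodes le_sa) /down_sum big_mkcond [RHS]big_mkcond.
  apply: eq_bigr => a' _; case: (tleP a' a) => _; rewrite ?andbT ?andbF //.
  by case: tleP => // not_le_sa'; rewrite mu_eq0.
rewrite /down_sum big1 => [|a' /tleP le_a'a].
  by case: eqP => // eq_sa; case: not_le_sa; rewrite eq_sa; apply: tle_refl.
by apply: mu_eq0 => le_sa'; case: not_le_sa; apply: tle_trans le_sa' le_a'a.
Qed.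

Definition coef (x : elt) (a : tree) : rat := \sum_(p <- x | p.2 == a) p.1.

Lemma coef2_tensor x y a b : coef2 (tensor x y) a b = coef x a * coef y b.
Proof.
rewrite /coef2 /tensor /coef big_mkcond big_allpairs_dep [in RHS]big_mkcond mulr_suml.
apply: eq_bigr => p _; rewrite [in RHS]big_mkcond mulr_sumr; apply: eq_bigr => q _ /=.
by rewrite xpair_eqE; case: (p.2 == a); case: (q.2 == b); rewrite ?mulr0 ?mul0r.
Qed.

Lemma coef_Mb s a : coef (Mb s) a = mu s a.
Proof.
rewrite /coef /Mb big_map big_filter_cond /= sum_pred1_uniq ?uniq_trees // mem_trees.
by case: (tleP s a) => [le_sa|/mu_eq0 ->]; rewrite ?(tle_nnodes le_sa) ?eqxx ?andbF.
Qed.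

Lemma sum_tsplit_positions (R : nmodType) u p (c : R) :
  \sum_(i <- iota 0 (nnodes u).+1 | tsplit u i == p) c =
  if tsplit u (nnodes p.1) == p then c else 0.
Proof.
have size_p i : tsplit u i = p -> nnodes p.1 = minn i (nnodes u).
  by move=> <-; apply: nnodes_tsplit1.
rewrite big_seq_cond (eq_bigl (fun i =>
  (i \in iota 0 (nnodes u).+1) && (tsplit u i == p) && (i == nnodes p.1))).
  rewrite sum_pred1_uniq ?iota_uniq // andbA andbb mem_iota.
  case: eqP => [/size_p size_p1|_]; last by rewrite andbF.
  by rewrite andbT ifT //; lia.
move=> i; rewrite mem_iota; case: eqP => [/size_p size_p1|]; rewrite ?andbT ?andbF //.
by case: eqP => [->|ne]; rewrite ?andbT ?andbF //; apply/negbTE; lia.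
Qed.

Lemma coef2_Delta x a b :
  coef2 (Delta x) a b = \sum_(p <- x | tsplit p.2 (nnodes a) == (a, b)) p.1.
Proof.
rewrite /coef2 /Delta big_flatten big_map [RHS]big_mkcond; apply: eq_bigr => p _.
by rewrite big_map sum_tsplit_positions.
Qed.

Lemma coef2_Delta_Mb r a b : coef2 (Delta (Mb r)) a b =
  \sum_(u <- trees (nnodes r) | tle r u) mu r u * (tsplit u (nnodes a) == (a, b))%:R.
Proof.
rewrite coef2_Delta /Mb big_map big_filter_cond big_mkcondr; apply: eq_bigr => u _ /=.
by case: eqP; rewrite ?mulr1 ?mulr0.
Qed.

Lemma down_sum2_coef2_Delta_Mb r a b :
  down_sum2 (coef2 (Delta (Mb r))) a b = (r == over a b)%:R.
Proof.
under eq_down_sum2 => a' b' /tleP /tle_nnodes size_a' _ do rewrite coef2_Delta_Mb size_a'.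
rewrite down_sum2_sum -sum_mu_interval [RHS]big_mkcondr; apply: eq_bigr => u _.
by rewrite down_sum2Z down_sum2_pred1 -tle_over_tsplit; case: tle; rewrite ?mulr1 ?mulr0.
Qed.

Lemma coef2_rhs r a b :
  coef2 (rhs r) a b = \sum_(st <- decomps r) mu st.1 a * mu st.2 b.
Proof.
rewrite /coef2 /rhs big_flatten big_map; apply: eq_bigr => st _.
by rewrite -coef_Mb -coef_Mb -coef2_tensor.
Qed.

Lemma down_sum2_coef2_rhs r a b : down_sum2 (coef2 (rhs r)) a b = (over a b == r)%:R.
Proof.
under eq_down_sum2 => a' b' _ _ do rewrite coef2_rhs.
rewrite down_sum2_sum.
under eq_bigr do rewrite down_sum2M !down_sum_mu -natrM mulnb -xpair_eqE.
by rewrite sum_indicator_uniq ?uniq_decomps // mem_decomps andbT.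
Qed.

Theorem theorem5p1 (n : nat) (r : tree) :
  nnodes r = n ->
  forall a b : tree, coef2 (Delta (Mb r)) a b = coef2 (rhs r) a b.
Proof.
move=> _; apply: down_sum2_inj => a b.
by rewrite down_sum2_coef2_Delta_Mb down_sum2_coef2_rhs eq_sym.
Qed.
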